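(* Let $G$ be a graph, $k,\ell\ge1$, $S$ an independent set of size $k$, and $J_0=S,J_1,\dots,J_\ell$ independent sets of $G$. Define $\mathcal{C}_0=\{\{(S,k)\}\}$ and, for $i\in\{1,\dots,\ell\}$, let $\mathcal{C}_i$ contain, for every $C\in\mathcal{C}_{i-1}$ and every constraint $(X,b)\in C$, the constraint set $C'$ consisting of: $(N(X)\cap J_i,1)$; $(X\cap J_i,b-1)$ if $b\ge2$ (nothing if $b=1$); and $(X'\cap J_i,b')$ for every other constraint $(X',b')\in C$. Let $i\in\{0,\dots,\ell\}$. If $Z\subseteq J_i$ is an independent set of size $k$ that satisfies at least one constraint set in $\mathcal{C}_i$, then $Z$ is reachable from $S$ by token slides, i.e., there is a sequence $S=I_0,I_1,\dots,I_m=Z$ of independent sets of size $k$ in $G$ such that each $I_{j+1}=(I_j\setminus\{u\})\cup\{v\}$ for some $u\in I_j$, $v\notin I_j$ with $\{u,v\}\in E(G)$.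
   Context: A constraint is a pair $(X,b)$ with $X\subseteq V(G)$ and $b$ a positive integer. A set $Z\subseteq V(G)$ satisfies $(X,b)$ if $|Z\cap X|=b$, and satisfies a constraint set $C$ if it satisfies every constraint in $C$. For $X\subseteq V(G)$, $N(X)=\{v\notin X: v\text{ adjacent to some }u\in X\}$. In the paper, $J_1,\dots,J_\ell$ are members of an independence covering family for $(G,k)$. *)

From HB Require Import structures.
From mathcomp Require Import all_boot.
From mathcomp Require Import finmap.
Set Implicit Arguments. Unset Strict Implicit. Unset Printing Implicit Defensive.
Local Open Scope fset_scope.

(* A simple graph: vertex type T (finite), edge relation e (assumed symmetric,
   irreflexive in the theorem). *)

Definition independent (T : finType) (e : rel T) (A : {set T}) : Prop :=
  forall x y, x \in A -> y \in A -> ~~ e x y.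

Definition nbh (T : finType) (e : rel T) (X : {set T}) : {set T} :=
  [set v | (v \notin X) && [exists u in X, e u v]].

Definition constraint (T : finType) := ({set T} * nat)%type.
Definition cset (T : finType) := {fset constraint T}.

Definition sat_constraint (T : finType) (Z : {set T}) (c : constraint T) : Prop :=
  #|Z :&: c.1| = c.2.
Definition sat_cset (T : finType) (Z : {set T}) (C : cset T) : Prop :=
  forall c, c \in C -> sat_constraint Z c.

Definition cstep (T : finType) (e : rel T) (J : {set T}) (C : cset T)
  (c : constraint T) : cset T :=
  [fset ((nbh e c.1 :&: J), 1%N)]
  `|` (if (2 <= c.2)%N then [fset ((c.1 :&: J), c.2.-1)] else fset0)
  `|` [fset ((x.1 :&: J), x.2) | x in C `\ c].

(* Cfam e J S k i C  <->  C belongs to the family C_i *)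
Fixpoint Cfam (T : finType) (e : rel T) (J : nat -> {set T}) (S : {set T})
  (k : nat) (i : nat) (C : cset T) : Prop :=
  match i with
  | 0 => C = [fset (S, k)]
  | i'.+1 => exists C0 c, Cfam e J S k i' C0 /\ c \in C0 /\ C = cstep e (J i) C0 c
  end.

Definition slide (T : finType) (e : rel T) (A B : {set T}) : Prop :=
  exists u v, u \in A /\ v \notin A /\ e u v /\ B = v |: (A :\ u).

Definition TS_reachable (T : finType) (e : rel T) (k : nat) (S Z : {set T}) : Prop :=
  exists (m : nat) (I : nat -> {set T}),
    I 0 = S /\ I m = Z /\
    (forall j, (j <= m)%N -> independent e (I j) /\ #|I j| = k) /\
    (forall j, (j < m)%N -> slide e (I j) (I j.+1)).

From HB Require Import structures.
From mathcomp Require Import all_boot finmap.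
Set Implicit Arguments. Unset Strict Implicit. Unset Printing Implicit Defensive.

(* Induct on [i], sliding backwards.  Every constraint set of the family C_i either
   contains an unsatisfiable constraint (set0, b) with b > 0, or is a family of
   pairwise disjoint subsets of J_i whose demands add up to k; a step preserves this
   because J_i is independent, so N(X) meets no other set of the family.  In the
   second case a k-set Z satisfying the constraint set lies inside the union of its
   sets.  So if Z ⊆ J_(i+1) satisfies the step C' of C at (X, b), the unique vertex p
   of Z in N(X) has a neighbour x in X, every other vertex of Z lies in a set of C,
   and Z - p + x ⊆ J_i satisfies C: by induction it is reachable, and sliding the
   token from x to p gives Z. *)

Section Constraints.
Variables (T : finType) (e : rel T).
Implicit Types (Z Ji Jn : {set T}) (k : nat) (C : cset T) (c : constraint T).
Implicit Types (s : seq (constraint T)).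

Definition disjointc : rel (constraint T) := fun c c' => [disjoint c.1 & c'.1].

Lemma disjointc_sym : symmetric disjointc.
Proof. by move=> c c'; rewrite /disjointc disjoint_sym. Qed.

Lemma pairwise_disjointc s c c' : pairwise disjointc s ->
  c \in s -> c' \in s -> c != c' -> disjointc c c'.
Proof.
elim: s => // d t IH /= /andP [/allP hd ht]; rewrite !inE.
case/orP=> [/eqP -> | hc]; case/orP=> [/eqP -> | hc'] //; first by rewrite eqxx.
- by move=> _; apply: hd.
- by move=> _; rewrite disjointc_sym; apply: hd.
- exact: IH.
Qed.

Lemma sum_filter_disjointc s c : pairwise disjointc s -> c \in s -> c.1 != set0 ->
  \sum_(y <- s) y.2 = c.2 + \sum_(y <- filter (predC1 c) s) y.2.
Proof.
move=> + + c_ne0; elim: s => // d t IH /andP [/allP hd ht].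
rewrite inE big_cons /=; have [eq_cd _ | ne_dc /= hct] := eqVneq c d.
  subst d; congr (_ + _); apply: congr_big => //.
  apply/esym/all_filterP/allP => y hy /=; apply: contraTneq (hd y hy) => ->.
  by rewrite /disjointc -setI_eq0 setIid.
by rewrite big_cons IH // addnCA.
Qed.

Lemma cover_of_sum s Z : pairwise disjointc s ->
  (forall c, c \in s -> sat_constraint Z c) -> \sum_(c <- s) c.2 = #|Z| ->
  forall z, z \in Z -> exists2 c, c \in s & z \in c.1.
Proof.
elim: s Z => [|c t IH] Z /=.
  by rewrite big_nil => _ _ /esym/cards0_eq -> z; rewrite inE.
move=> /andP [/allP hct ht] hsat; rewrite big_cons => hsum z hz.
have [zc | zc] := boolP (z \in c.1); first by exists c; rewrite ?mem_head.
have hsatD c' : c' \in t -> sat_constraint (Z :\: c.1) c'.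
  move=> hc'; rewrite /sat_constraint -(hsat c') ?inE ?hc' ?orbT //.
  apply: eq_card => v; rewrite !inE.
  by case: (boolP (v \in c'.1)) => hv; rewrite ?andbF ?(disjointFl (hct _ hc') hv).
have hsumD : \sum_(c' <- t) c'.2 = #|Z :\: c.1|.
  by rewrite cardsD (hsat c) ?mem_head // -hsum addKn.
have [|c' hc' zc'] := IH _ ht hsatD hsumD z; first by rewrite inE zc.
by exists c'; rewrite // inE hc' orbT.
Qed.

Lemma nbh_set0 : nbh e set0 = set0.
Proof. by apply/setP => v; rewrite !inE; apply/existsP => -[u]; rewrite inE. Qed.

Lemma nbh_disjoint X : [disjoint nbh e X & X].
Proof. by rewrite disjoints_subset; apply/subsetP => v; rewrite !inE => /andP []. Qed.

Definition restrict (J : {set T}) c : constraint T := (c.1 :&: J, c.2).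

Lemma setI_restrict (J : {set T}) Z c : Z \subset J -> Z :&: (restrict J c).1 = Z :&: c.1.
Proof. by move=> hZJ; rewrite /= setIA setIAC (setIidPl hZJ). Qed.

Lemma cstep_nbh Jn C c : restrict Jn (nbh e c.1, 1) \in cstep e Jn C c.
Proof. by rewrite /cstep !in_fsetU in_fset1 eqxx. Qed.

Lemma cstep_self Jn C c : 1 < c.2 -> restrict Jn (c.1, c.2.-1) \in cstep e Jn C c.
Proof. by move=> h; rewrite /cstep !in_fsetU h fset11 orbT. Qed.

Lemma cstep_other Jn C c y : y \in C -> y != c -> restrict Jn y \in cstep e Jn C c.
Proof.
move=> hy ne_yc; rewrite /cstep !in_fsetU; apply/orP; right.
by apply/imfsetP; exists y; rewrite //= in_fsetD1 ne_yc.
Qed.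

Lemma cstepP Jn C c x : x \in cstep e Jn C c ->
  [\/ x = restrict Jn (nbh e c.1, 1), 1 < c.2 /\ x = restrict Jn (c.1, c.2.-1) |
      exists2 y, y \in C /\ y != c & x = restrict Jn y].
Proof.
rewrite /cstep !in_fsetU => /orP [/orP [] |].
- by rewrite in_fset1 => /eqP ->; apply: Or31.
- by case: ifP => h; rewrite ?in_fset0 // in_fset1 => /eqP ->; apply: Or32.
- by case/imfsetP => y /=; rewrite in_fsetD1 => /andP [ne_yc hy] ->; apply: Or33; exists y.
Qed.

Definition cstep_seq Jn s c : seq (constraint T) :=
  map (restrict Jn) ((nbh e c.1, 1) ::
    (if 1 < c.2 then [:: (c.1, c.2.-1)] else [::]) ++ filter (predC1 c) s).

Lemma cstep_seq_mem Jn C s c : C =i s -> cstep e Jn C c =i cstep_seq Jn s c.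
Proof.
move=> hCs x; rewrite /cstep /cstep_seq map_cons map_cat in_cons mem_cat.
rewrite !in_fsetU in_fset1 -orbA.
congr [|| _, _ | _]; first by case: ifP; rewrite ?in_fset0 ?in_fset1 ?inE.
by apply/imfsetP/mapP => -[y hy ->]; exists y => //;
  move: hy; rewrite in_fsetD1 mem_filter hCs.
Qed.

Lemma pairwise_cstep_seq Ji Jn s c : independent e Ji -> pairwise disjointc s ->
  (forall y, y \in s -> y.1 \subset Ji) -> c \in s -> pairwise disjointc (cstep_seq Jn s c).
Proof.
move=> hJi hs hsub hc; rewrite /cstep_seq pairwise_map.
apply: (sub_pairwise (r := disjointc)) => [y y' |].
  by apply: disjointW; apply: subsetIl.
have dX y : y \in filter (predC1 c) s -> [disjoint c.1 & y.1].
  rewrite mem_filter => /andP [ne_yc hy].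
  by apply: (pairwise_disjointc hs); rewrite // eq_sym.
have dN y : y \in filter (predC1 c) s -> [disjoint nbh e c.1 & y.1].
  rewrite mem_filter => /andP [_ hy]; rewrite disjoints_subset; apply/subsetP => v.
  rewrite !inE => /andP [_ /existsP [u /andP [hu huv]]]; apply/negP => hv.
  by have := hJi u v (subsetP (hsub c hc) u hu) (subsetP (hsub y hy) v hv); rewrite huv.
rewrite /= pairwise_cat pairwise_filter // all_cat !andbT.
have allN : all (disjointc (nbh e c.1, 1)) (filter (predC1 c) s) by apply/allP.
have allX : allrel disjointc [:: (c.1, c.2.-1)] (filter (predC1 c) s).
  by rewrite allrel1l; apply/allP.
by case: ifP => _ /=; rewrite ?andbT allN // allX !andbT; apply: nbh_disjoint.
Qed.

Lemma sum_cstep_seq Jn s c : pairwise disjointc s -> c \in s -> c.1 != set0 -> 0 < c.2 ->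
  \sum_(y <- cstep_seq Jn s c) y.2 = \sum_(y <- s) y.2.
Proof.
move=> hs hc c_ne0 c_gt0; rewrite big_map big_cons big_cat (sum_filter_disjointc hs hc) //=.
case: ltnP => h; rewrite ?big_seq1 ?big_nil /=; first by rewrite addnA add1n prednK.
by have -> : c.2 = 1 by apply/eqP; rewrite eqn_leq h.
Qed.

Definition void_constraint C := exists2 c, c \in C & c.1 = set0 /\ 0 < c.2.

(* The demands are summed along a list enumerating [C] with repetitions allowed:
   [cstep] may merge two constraints that become equal after restriction. *)
Definition packing Ji k C := exists s, C =i s /\ pairwise disjointc s /\
  (forall c, c \in s -> c.1 \subset Ji /\ 0 < c.2) /\ \sum_(c <- s) c.2 = k.

Definition admissible Ji k C := void_constraint C \/ packing Ji k C.

Lemma packing_disjoint Ji k C c c' : packing Ji k C ->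
  c \in C -> c' \in C -> c != c' -> [disjoint c.1 & c'.1].
Proof. by case=> s [hCs [hs _]]; rewrite !hCs; apply: pairwise_disjointc. Qed.

Lemma packing_sub Ji k C c : packing Ji k C -> c \in C -> c.1 \subset Ji /\ 0 < c.2.
Proof. by case=> s [hCs [_ [hsub _]]]; rewrite hCs; apply: hsub. Qed.

Lemma sat_void Z C : sat_cset Z C -> ~ void_constraint C.
Proof.
move=> hsat [c hc [c_0 c_gt0]]; move: (hsat c hc).
by rewrite /sat_constraint c_0 setI0 cards0 => c2_0; rewrite -c2_0 in c_gt0.
Qed.

Lemma void_cstep Jn C c : void_constraint C -> void_constraint (cstep e Jn C c).
Proof.
case=> y hy [y_0 y_gt0]; have [<- | ne_yc] := eqVneq y c.
  by exists (restrict Jn (nbh e y.1, 1)); rewrite ?cstep_nbh //= y_0 nbh_set0 set0I.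
by exists (restrict Jn y); rewrite ?cstep_other //= y_0 set0I.
Qed.

Lemma packing_cstep Ji Jn k C c : independent e Ji -> packing Ji k C ->
  c \in C -> c.1 != set0 -> packing Jn k (cstep e Jn C c).
Proof.
move=> hJi [s [hCs [hs [hsub <-]]]] hc c_ne0; rewrite hCs in hc.
exists (cstep_seq Jn s c); split; first exact: cstep_seq_mem.
split; first by apply: (pairwise_cstep_seq _ hJi hs) => // y /hsub [].
split; last by rewrite sum_cstep_seq //; case: (hsub c hc).
move=> y /mapP [y0 hy0 ->]; split; first exact: subsetIr.
move: hy0; rewrite inE mem_cat mem_filter => /or3P [/eqP -> //| |/andP [_ /hsub []] //].
by case: ltnP => // h; rewrite inE => /eqP -> /=; rewrite ltn_predRL.
Qed.

Lemma admissible_cstep Ji Jn k C c : independent e Ji -> admissible Ji k C ->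
  c \in C -> admissible Jn k (cstep e Jn C c).
Proof.
move=> hJi [hvoid | hpack] hc; first by left; apply: void_cstep.
have [c_0 | c_ne0] := eqVneq c.1 set0.
  by left; apply: void_cstep; exists c => //; split => //; case: (packing_sub hpack hc).
by right; apply: packing_cstep hJi hpack hc c_ne0.
Qed.

Lemma packing_cover Ji k C Z : packing Ji k C -> sat_cset Z C -> #|Z| = k ->
  forall z, z \in Z -> exists2 c, c \in C & z \in c.1.
Proof.
case=> s [hCs [hs [_ hsum]]] hsat hZk z hz.
have hsat_s c : c \in s -> sat_constraint Z c by rewrite -hCs; apply: hsat.
have [c hc zc] := cover_of_sum hs hsat_s (etrans hsum (esym hZk)) hz.
by exists c; rewrite ?hCs.
Qed.

End Constraints.

Section SlideBack.
Variables (T : finType) (e : rel T) (Ji Jn : {set T}) (k : nat).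
Variables (C : cset T) (c : constraint T) (Z : {set T}).
Hypotheses (hJi : independent e Ji) (hpack : packing Ji k C) (hc : c \in C).
Hypotheses (hZ : independent e Z) (hZJ : Z \subset Jn) (hsat : sat_cset Z (cstep e Jn C c)).
Hypothesis hcov : forall z, z \in Z -> exists2 c', c' \in cstep e Jn C c & z \in c'.1.

Lemma cstep_nbh_single : exists p, Z :&: (nbh e c.1 :&: Jn) = [set p].
Proof. exact/cards1P/eqP/(hsat (cstep_nbh _ _ _ _)). Qed.

Section Witness.
Variables (p x : T).
Hypotheses (hp : Z :&: (nbh e c.1 :&: Jn) = [set p]) (hx : x \in c.1) (hxp : e x p).

Let hpZ : p \in Z.
Proof. by have := set11 p; rewrite -hp inE => /andP []. Qed.

Let hpX : p \notin c.1.
Proof. by have := set11 p; rewrite -hp !inE => /and3P [_ /andP []]. Qed.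

Let hxZ : x \notin Z.
Proof. by apply: contraL hxp => hxZ; apply: hZ. Qed.

Lemma cover_neq_p z : z \in Z -> z != p ->
  (1 < c.2 /\ z \in c.1) \/ exists2 y, y \in C /\ y != c & z \in y.1.
Proof.
move=> hz ne_zp; have [c' /cstepP [-> | [h2 ->] | [y hy ->]]] := hcov hz; rewrite /= inE.
- move=> hzN; have : z \in Z :&: (nbh e c.1 :&: Jn) by rewrite inE hz inE.
  by rewrite hp inE (negPf ne_zp).
- by case/andP=> hzX _; left.
- by case/andP=> hzy _; right; exists y.
Qed.

Lemma slide_back_sub : x |: (Z :\ p) \subset Ji.
Proof.
apply/subsetP => z; rewrite !inE => /orP [/eqP -> | /andP [ne_zp hz]].
  exact: subsetP (packing_sub hpack hc).1 x hx.
case: (cover_neq_p hz ne_zp) => [[_ hzX] | [y [hy _] hzy]].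
- exact: subsetP (packing_sub hpack hc).1 z hzX.
- exact: subsetP (packing_sub hpack hy).1 z hzy.
Qed.

Lemma slide_back_card : #|x |: (Z :\ p)| = #|Z|.
Proof. by rewrite cardsU1 !inE negb_and hxZ orbT (cardsD1 p Z) hpZ. Qed.

Lemma slide_back_sat_self : sat_constraint (x |: (Z :\ p)) c.
Proof.
rewrite /sat_constraint.
have -> : (x |: (Z :\ p)) :&: c.1 = x |: (Z :&: c.1).
  apply/setP => z; rewrite !inE; have [-> | ne_zx] //= := eqVneq z x.
  by have [-> | ne_zp] //= := eqVneq z p; rewrite (negPf hpX) andbF.
rewrite cardsU1 inE (negPf hxZ) /=; have c_gt0 := (packing_sub hpack hc).2.
have [c_gt1 | c_le1] := ltnP 1 c.2.
  have := hsat (cstep_self e Jn C c_gt1); rewrite /sat_constraint setI_restrict // => ->.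
  by rewrite add1n prednK.
suff -> : Z :&: c.1 = set0 by rewrite cards0 addn0; apply/eqP; rewrite eqn_leq c_gt0 c_le1.
apply/setP => z; rewrite !inE; apply/negP => /andP [hz hzX].
have ne_zp : z != p by apply: contraNneq hpX => <-.
case: (cover_neq_p hz ne_zp) => [[h2 _] | [y [hy ne_yc] hzy]].
  by rewrite ltnNge c_le1 in h2.
by rewrite (disjointFr (packing_disjoint hpack hc hy _) hzX) // eq_sym in hzy.
Qed.

Lemma slide_back_sat : sat_cset (x |: (Z :\ p)) C.
Proof.
move=> c' hc'; have [-> | ne_c'c] := eqVneq c' c; first exact: slide_back_sat_self.
have dis : [disjoint c.1 & c'.1] by apply: (packing_disjoint hpack hc hc'); rewrite eq_sym.
have hpc' : p \notin c'.1.
  apply: contraL hxp => hpc'; apply: hJi.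
  - exact: subsetP (packing_sub hpack hc).1 x hx.
  - exact: subsetP (packing_sub hpack hc').1 p hpc'.
have := hsat (cstep_other e Jn hc' ne_c'c); rewrite /sat_constraint setI_restrict //= => <-.
apply: eq_card => z; rewrite !inE; have [-> | ne_zx] /= := eqVneq z x.
  by rewrite (disjointFr dis hx) (negPf hxZ).
by have [-> | ne_zp] //= := eqVneq z p; rewrite (negPf hpc') andbF.
Qed.

Lemma slide_back_slide : slide e (x |: (Z :\ p)) Z.
Proof.
have hxZp : x \notin Z :\ p by rewrite inE negb_and hxZ orbT.
exists x, p; split; first exact: setU11.
split; first by rewrite !inE eqxx andFb orbF; apply: contraNneq hpX => ->.
by split; rewrite // setU1K // setD1K.
Qed.
End Witness.

Lemma slide_back : exists Z' : {set T},
  [/\ Z' \subset Ji, #|Z'| = #|Z|, sat_cset Z' C & slide e Z' Z].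
Proof.
have [p hp] := cstep_nbh_single.
have /existsP [x /andP [hx hxp]] : [exists x in c.1, e x p].
  by have := set11 p; rewrite -hp !inE => /and3P [_ /andP [_ ?]].
exists (x |: (Z :\ p)); split.
- exact: slide_back_sub hp hx.
- exact: slide_back_card hp hxp.
- exact: slide_back_sat hp hx hxp.
- exact: slide_back_slide hp hx hxp.
Qed.
End SlideBack.

Section Reachability.
Variables (T : finType) (e : rel T) (k : nat) (S : {set T}).

Lemma TS_reachable_refl : independent e S -> #|S| = k -> TS_reachable e k S S.
Proof. by move=> hS hSk; exists 0, (fun=> S); do 3!split=> //. Qed.

Lemma TS_reachable_snoc A B : TS_reachable e k S A ->
  independent e B -> #|B| = k -> slide e A B -> TS_reachable e k S B.
Proof.
case=> m [I [I0 [Im [hI hslide]]]] hB hBk hAB.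
exists m.+1, (fun j => if j <= m then I j else B); split=> /=; first by [].
split; first by rewrite ltnn.
split=> [j hj | j]; first by case: ifP => [hjm | _]; [apply: hI | split].
rewrite ltnS => hjm; rewrite hjm; have [-> | ne_jm] := eqVneq j m; first by rewrite ltnn Im.
have hj : j < m by rewrite ltn_neqAle ne_jm hjm.
by rewrite hj; apply: hslide.
Qed.

Variables (l : nat) (J : nat -> {set T}).
Hypotheses (k_gt0 : 0 < k) (hS : independent e S) (hSk : #|S| = k) (hJ0 : J 0 = S).
Hypothesis hJ : forall i, 0 < i <= l -> independent e (J i).

Lemma independent_J i : i <= l -> independent e (J i).
Proof. by case: i => [|i] hi; [rewrite hJ0 | apply: hJ]. Qed.

Lemma admissible_Cfam i C : i <= l -> Cfam e J S k i C -> admissible (J i) k C.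
Proof.
elim: i C => [|i IH] C hi /=.
  move=> ->; right; exists [:: (S, k)]; split; first by move=> c; rewrite in_fset1 inE.
  split=> //; split; last by rewrite big_seq1.
  by move=> c; rewrite inE => /eqP -> /=; rewrite hJ0 subxx.
case=> C0 [c [hC0 [hc ->]]]; apply: admissible_cstep hc.
- exact: independent_J (ltnW hi).
- exact: IH (ltnW hi) hC0.
Qed.

Lemma Cfam_reachable i C (Z : {set T}) : i <= l -> Cfam e J S k i C ->
  Z \subset J i -> independent e Z -> #|Z| = k -> sat_cset Z C -> TS_reachable e k S Z.
Proof.
elim: i C Z => [|i IH] C Z hi /=.
  move=> -> hZJ _ hZk _; rewrite hJ0 in hZJ.
  have -> : Z = S by apply/eqP; rewrite eqEcard hZJ hSk hZk leqnn.
  exact: TS_reachable_refl.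
case=> C0 [c [hC0 [hc ->]]] hZJ hZ hZk hsat.
have hJi := independent_J (ltnW hi).
have [hvoid | hpack] := admissible_Cfam (ltnW hi) hC0.
  by case: (sat_void hsat); apply: void_cstep.
have [hvoid' | hpack'] := admissible_cstep (J i.+1) hJi (or_intror hpack) hc.
  by case: (sat_void hsat).
have [Z' [hZ'J hZ'k hsatZ' hslide]] :=
  slide_back hJi hpack hc hZ hZJ hsat (packing_cover hpack' hsat hZk).
have hZ'i : independent e Z' by move=> u v hu hv; apply: hJi; apply: (subsetP hZ'J).
have hreach := IH C0 Z' (ltnW hi) hC0 hZ'J hZ'i (etrans hZ'k hZk) hsatZ'.
exact: TS_reachable_snoc hreach hZ hZk hslide.
Qed.
End Reachability.

Theorem lemma3p5 (T : finType) (e : rel T)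
  (e_sym : symmetric e) (e_irr : irreflexive e)
  (k l : nat) (hk : (1 <= k)%N) (hl : (1 <= l)%N)
  (S : {set T}) (hS : independent e S) (hSk : #|S| = k)
  (J : nat -> {set T}) (hJ0 : J 0%N = S)
  (hJ : forall i, (1 <= i <= l)%N -> independent e (J i))
  (i : nat) (hi : (i <= l)%N)
  (Z : {set T}) (hZJ : Z \subset J i) (hZ : independent e Z) (hZk : #|Z| = k)
  (hC : exists C, Cfam e J S k i C /\ sat_cset Z C) :
  TS_reachable e k S Z.
Proof.
case: hC => C [hCfam hsat].
exact: (Cfam_reachable hk hS hSk hJ0 hJ hi hCfam hZJ hZ hZk hsat).
Qed.
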